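(* For every integer $k\ge 0$, as $n\to\infty$, \[ \langle S_{2,n}^{-k}\rangle\sim\left(\frac{n}{4}\right)^{-k}. \]
   Context: For $n\ge 1$, let $\Omega_n$ be the set of rooted plane (ordered) full binary trees with $n$ leaves (every internal node has exactly two children, left and right distinguished). The random model is $\Omega_n$ with the uniform probability measure $P_n$; $\langle\cdot\rangle$ denotes expectation with respect to $P_n$. Horton–Strahler ordering: every leaf has order 1; an internal node whose two children have different orders $r_1\neq r_2$ has order $\max\{r_1,r_2\}$; an internal node whose two children both have order $r$ has order $r+1$. A branch of order $r$ is a maximal connected path consisting of nodes all of order $r$. $S_{2,n}(\tau)$ is the number of branches of order $2$ in $\tau\in\Omega_n$; for $n\ge 2$ one has $S_{2,n}\ge 1$. For sequences, $a_n\sim b_n$ means $\lim_{n\to\infty}a_n/b_n=1$. *)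

From HB Require Import structures.
From mathcomp Require Import all_boot all_order all_algebra.
From mathcomp Require Import all_classical all_reals all_analysis.
Set Implicit Arguments. Unset Strict Implicit. Unset Printing Implicit Defensive.
Import Order.TTheory GRing.Theory Num.Theory.

Inductive btree : Type := Leaf : btree | Node : btree -> btree -> btree.

Fixpoint leaves (t : btree) : nat :=
  match t with Leaf => 1 | Node l r => leaves l + leaves r end.

Fixpoint hs (t : btree) : nat :=
  match t with
  | Leaf => 1
  | Node l r => let a := hs l in let b := hs r in
                if a == b then a.+1 else maxn a b
  end.

(* Nodes of order r form vertical paths (a node has at most one child of its
   own order).  Each maximal such path (a branch of order r) is identified by
   its top node: a node of order r whose parent is not of order r (or which is
   the root).  [branches_aux r p t] counts these top nodes in the subtree t,
   where p is the order of the parent of t (p = 0 for the root). *)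
Fixpoint branches_aux (r p : nat) (t : btree) : nat :=
  ((hs t == r) && (p != r)) +
  match t with
  | Leaf => 0
  | Node l rt => branches_aux r (hs t) l + branches_aux r (hs t) rt
  end.

Definition branches (r : nat) (t : btree) : nat := branches_aux r 0 t.

Definition S2 (t : btree) : nat := branches 2 t.

(* Enumeration of all trees with exactly n leaves (each exactly once);
   m is fuel (depth m >= n suffices). *)
Fixpoint trees_aux (m n : nat) : seq btree :=
  match m with
  | 0 => [::]
  | m'.+1 =>
      if n == 1 then [:: Leaf]
      else flatten [seq [seq Node l r | l <- trees_aux m' i, r <- trees_aux m' (n - i)]
                   | i <- iota 1 n.-1]
  end.

Definition Omega (n : nat) : seq btree := trees_aux n n.

Local Open Scope ring_scope.

Definition expect_n (R : realType) (n : nat) (X : btree -> R) : R :=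
  (\sum_(t <- Omega n) X t) / (size (Omega n))%:R.

(* S_2 counts the cherries of a tree (internal nodes with two leaf children).
   Grafting a new leaf next to any node of a tree with n leaves produces every
   tree with n + 1 leaves exactly n + 1 times, which gives an exact recursion for
   E_{n+1}[h(S_2)] in terms of E_n.  It yields the mean n(n-1)/(2(2n-3)) <= (n+2)/4
   and, for 0 <= x <= 1, a geometric decay of E_n[x^S_2] at any rate above
   (3 + x)/4.  The lower bound is Jensen's inequality (the tangent of s^-k at the
   mean).  For the upper bound we split at S_2 = (1 - 1/(D+1)) n/4: above the
   threshold S_2^-k <= (1 + 1/D)^k (n/4)^-k, and below it Markov's inequality for
   x^S_2 makes the contribution exponentially small. *)

From HB Require Import structures.
From mathcomp Require Import all_boot all_order all_algebra.
From mathcomp Require Import all_classical all_reals all_analysis.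
From mathcomp Require Import zify ring lra.
Import Order.TTheory GRing.Theory Num.Theory.
Import numFieldNormedType.Exports.
Set Implicit Arguments. Unset Strict Implicit. Unset Printing Implicit Defensive.

Fixpoint btree_eqb (t u : btree) : bool :=
  match t, u with
  | Leaf, Leaf => true
  | Node a b, Node c d => btree_eqb a c && btree_eqb b d
  | _, _ => false
  end.

Lemma btree_eqbP : Equality.axiom btree_eqb.
Proof.
elim=> [|a IHa b IHb] [|c d] /=; try by constructor.
by apply: (iffP andP) => [[/IHa -> /IHb ->]|[<- <-]]; split; [apply/IHa|apply/IHb].
Qed.

HB.instance Definition _ := hasDecEq.Build btree btree_eqbP.

Definition is_leaf (t : btree) : bool := if t is Leaf then true else false.

Fixpoint cherries (t : btree) : nat :=
  match t with
  | Leaf => 0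
  | Node l r => cherries l + cherries r + (is_leaf l && is_leaf r)
  end.

Lemma hs_gt0 t : 0 < hs t.
Proof.
by elim: t => //= l IHl r IHr; case: ifP => _ //; rewrite leq_max IHl.
Qed.

Lemma hs_eq1 t : (hs t == 1) = is_leaf t.
Proof.
case: t => //= l r; have := hs_gt0 l; have := hs_gt0 r.
case: ifP => [/eqP|/negbT]; first by lia.
by move=> ? ? ?; apply/negbTE; rewrite /maxn; case: ltnP; lia.
Qed.

(* Every branch of order 2 ends at exactly one cherry. *)
Lemma branches_aux2_cherries p t :
  branches_aux 2 p t + (hs t == 2) = cherries t + ((hs t == 2) && (p != 2)).
Proof.
elim: t p => [|l IHl r IHr] p //=.
have orders a b : 0 < a -> 0 < b ->
    let h := if a == b then a.+1 else maxn a b in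
    ((a == 2) && (h != 2)) + ((b == 2) && (h != 2)) + (h == 2)
    = (a == 2) + (b == 2) + ((a == 1) && (b == 1)).
  case: a => [|[|[|a]]] // _; case: b => [|[|[|b]]] //= _.
  by rewrite ?eqSS /maxn; repeat case: ifP.
have := orders _ _ (hs_gt0 l) (hs_gt0 r); rewrite !hs_eq1 /=.
set h := (if hs l == hs r then _ else _).
by have := IHl h; have := IHr h; lia.
Qed.

Lemma S2_cherries t : S2 t = cherries t.
Proof. by have := branches_aux2_cherries 0 t; rewrite /S2 /branches; lia. Qed.

Lemma cherries_gt0 t : t != Leaf -> 0 < cherries t.
Proof.
elim: t => [|l IHl r IHr] //= _.
case: l IHl => [|l1 l2] IHl; case: r IHr => [|r1 r2] IHr //.
- by have := IHr isT; lia.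
- by have := IHl isT; lia.
- by have := IHl isT; lia.
Qed.

Lemma trees_aux_fuel m n : n <= m -> trees_aux m n = Omega n.
Proof.
have unfold i q : trees_aux i.+1 q = if q == 1 then [:: Leaf] else
    flatten [seq [seq Node l r | l <- trees_aux i h, r <- trees_aux i (q - h)]
            | h <- iota 1 q.-1] by [].
have fuelS j p : p <= j -> trees_aux j.+1 p = trees_aux j p.
  elim: j p => [|j IH] p hp; first by case: p hp.
  rewrite unfold [RHS]unfold; case: ifP => // _; congr flatten.
  by apply/eq_in_map => i; rewrite mem_iota => /andP[i_gt0 i_lt]; rewrite !IH //; lia.
elim: m => [|m IH] n_le; first by case: n n_le.
have [n_lt|n_ge] := ltnP n m.+1; first by rewrite fuelS // IH.
by have -> : n = m.+1 by lia.
Qed.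

Lemma Omega1 : Omega 1 = [:: Leaf]. Proof. by []. Qed.

Lemma Omega_node n : 1 < n -> Omega n =
  flatten [seq [seq Node l r | l <- Omega i, r <- Omega (n - i)] | i <- iota 1 n.-1].
Proof.
case: n => [|n] // hn; rewrite /Omega /= ifN; last by lia.
congr flatten; apply/eq_in_map => i; rewrite mem_iota => /andP[h1 h2].
by rewrite !trees_aux_fuel //; lia.
Qed.

Lemma leaves_Omega n t : t \in Omega n -> leaves t = n.
Proof.
elim/ltn_ind: n t => -[|[|n]] IH t //; first by rewrite inE => /eqP ->.
rewrite Omega_node // => /flattenP[s /mapP[i]]; rewrite mem_iota => /andP[h1 h2] ->.
case/allpairsP => -[l r] /= [hl hr ->] /=.
by rewrite (IH i) ?(IH (n.+2 - i)) //; lia.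
Qed.

Local Open Scope classical_set_scope.
Local Open Scope ring_scope.

Lemma big_Omega_node (R : nmodType) (F : btree -> R) n : (1 < n)%N ->
  \sum_(t <- Omega n) F t =
  \sum_(1 <= i < n) \sum_(l <- Omega i) \sum_(r <- Omega (n - i)) F (Node l r).
Proof.
move=> hn; rewrite Omega_node // big_flatten big_map /index_iota subn1.
by apply: eq_bigr => i _; rewrite big_allpairs_dep.
Qed.

Fixpoint grafts (t : btree) : seq btree :=
  [:: Node Leaf t, Node t Leaf
    & if t is Node l r then
        [seq Node l' r | l' <- grafts l] ++ [seq Node l r' | r' <- grafts r]
      else [::]].

Lemma big_grafts_node (R : nmodType) (G : btree -> R) l r :
  \sum_(u <- grafts (Node l r)) G u =
  G (Node Leaf (Node l r)) + G (Node (Node l r) Leaf) +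
  (\sum_(l' <- grafts l) G (Node l' r) + \sum_(r' <- grafts r) G (Node l r')).
Proof. by rewrite /= !big_cons big_cat !big_map addrA. Qed.

Lemma big_grafts_Omega (R : nmodType) (G : btree -> R) n : (0 < n)%N ->
  \sum_(t <- Omega n) \sum_(u <- grafts t) G u = (\sum_(u <- Omega n.+1) G u) *+ n.+1.
Proof.
elim/ltn_ind: n G => n IH G n_gt0.
have [n_gt1|] := ltnP 1 n; last first.
  case: n {IH} n_gt0 => [|[|]] // _ _.
  by rewrite /= !big_cons !big_nil !addr0.
pose P j := \sum_(l <- Omega j) \sum_(r <- Omega (n.+1 - j)) G (Node l r).
have slice i : (1 <= i < n)%N ->
    \sum_(l <- Omega i) \sum_(r <- Omega (n - i)) \sum_(u <- grafts (Node l r)) G u =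
    \sum_(l <- Omega i) \sum_(r <- Omega (n - i))
      (G (Node Leaf (Node l r)) + G (Node (Node l r) Leaf)) +
    (P i.+1 *+ i.+1 + P i *+ (n.+1 - i)).
  case/andP=> i1 i2.
  under eq_bigr do under eq_bigr do rewrite big_grafts_node.
  under eq_bigr do rewrite big_split /=.
  rewrite big_split /=; congr (_ + _).
  under eq_bigr do rewrite big_split /=.
  rewrite big_split /=; congr (_ + _).
    rewrite exchange_big /P [in RHS]exchange_big -sumrMnl subSS.
    by apply: eq_bigr => r _; rewrite IH.
  rewrite /P -sumrMnl; apply: eq_bigr => l _.
  by rewrite subSn ?IH //; lia.
rewrite [LHS]big_Omega_node // (eq_big_nat _ _ slice) big_split /=.
rewrite big_Omega_node // -sumrMnl.
transitivity (\sum_(1 <= j < n.+1) (P j *+ j + P j *+ (n.+1 - j))); last first.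
  by apply: eq_big_nat => j /andP[j1 j2]; rewrite -mulrnDr subnKC //; lia.
rewrite -(big_Omega_node (fun t => G (Node Leaf t) + G (Node t Leaf))) //.
rewrite !big_split /= [in RHS]big_ltn // [in RHS]big_add1 [in RHS]big_nat_recr //=.
rewrite subSnn !mulr1n /P subSnn Omega1 big_seq1 subn1 /=.
under [X in _ = _ + (_ + X)]eq_bigr do rewrite big_seq1.
by rewrite addrACA; congr (_ + _); rewrite addrC.
Qed.

Lemma is_leaf_grafts t u : u \in grafts t -> is_leaf u = false.
Proof.
case: t => [|l r] /=; rewrite !inE; first by case/orP => /eqP ->.
by case/or3P => [/eqP ->|/eqP ->|]; rewrite // mem_cat => /orP[] /mapP[? _ ->].
Qed.

Lemma big_grafts_cherries (R : comPzRingType) (h : nat -> R) t :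
  \sum_(u <- grafts t) h (cherries u) =
  (2 * (leaves t)%:R - 2 + 4 * (cherries t)%:R) * h (cherries t) +
  (2 * (leaves t)%:R - 4 * (cherries t)%:R) * h (cherries t).+1.
Proof.
elim: t h => [|l IHl r IHr] h; first by rewrite /= !big_cons big_nil; ring.
rewrite big_grafts_node.
rewrite (eq_big_seq (fun l' => h (cherries l' + cherries r)%N)); last first.
  by move=> l' /is_leaf_grafts /= ->; rewrite addn0.
rewrite [X in _ + (_ + X)](eq_big_seq (fun r' => h (cherries l + cherries r')%N));
  last first.
  by move=> r' /is_leaf_grafts /= ->; rewrite andbF addn0.
rewrite (IHl (fun c => h (c + cherries r)%N)) (IHr (fun c => h (cherries l + c)%N)).
rewrite /= addSn addnS.
by case: l {IHl} => [|l1 l2]; case: r {IHr} => [|r1 r2];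
  rewrite /= ?addn0 ?add0n ?natrD; ring.
Qed.

Lemma big_Omega_cherries_succ (R : comPzRingType) (h : nat -> R) n : (0 < n)%N ->
  n.+1%:R * \sum_(u <- Omega n.+1) h (cherries u) =
  \sum_(t <- Omega n) ((2 * n%:R - 2 + 4 * (cherries t)%:R) * h (cherries t) +
                       (2 * n%:R - 4 * (cherries t)%:R) * h (cherries t).+1).
Proof.
move=> n_gt0; rewrite mulr_natl -big_grafts_Omega //.
by apply: eq_big_seq => t /leaves_Omega <-; apply: big_grafts_cherries.
Qed.

Lemma size_Omega_succ (R : comPzRingType) n : (0 < n)%N ->
  n.+1%:R * (size (Omega n.+1))%:R = (4 * n%:R - 2) * (size (Omega n))%:R :> R.
Proof.
move=> n_gt0; rewrite -!sum1_size !natr_sum (big_Omega_cherries_succ (fun=> 1)) //.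
by rewrite mulr_sumr; apply: eq_bigr => t _; ring.
Qed.

Section Expectation.
Variable R : realType.
Implicit Types (n : nat) (X Y : btree -> R).

Lemma size_Omega_gt0 n : (0 < n)%N -> (0 < size (Omega n))%N.
Proof.
elim: n => [|[|n] IH] // _; rewrite -(ltr0n R) -(pmulr_rgt0 _ (ltr0Sn R n.+1)).
by rewrite size_Omega_succ // mulr_gt0 ?ltr0n ?IH //.
Qed.

Lemma expect_ge0 n X : {in Omega n, forall t, 0 <= X t} -> 0 <= expect_n n X.
Proof. by move=> X_ge0; rewrite divr_ge0 // big_seq sumr_ge0. Qed.

Lemma ler_expect n X Y :
  {in Omega n, forall t, X t <= Y t} -> expect_n n X <= expect_n n Y.
Proof. by move=> XY; rewrite ler_wpM2r // big_seq [leRHS]big_seq ler_sum. Qed.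

Lemma expectD n X Y :
  expect_n n (fun t => X t + Y t) = expect_n n X + expect_n n Y.
Proof. by rewrite /expect_n big_split mulrDl. Qed.

Lemma expectB n X Y :
  expect_n n (fun t => X t - Y t) = expect_n n X - expect_n n Y.
Proof. by rewrite /expect_n sumrB mulrBl. Qed.

Lemma expectZ n a X : expect_n n (fun t => a * X t) = a * expect_n n X.
Proof. by rewrite /expect_n -mulr_sumr mulrA. Qed.

Lemma expect_cst n (a : R) : (0 < n)%N -> expect_n n (fun=> a) = a.
Proof.
move=> n_gt0; rewrite /expect_n big_const_seq count_predT iter_addr_0.
by rewrite -[a *+ _]mulr_natr mulfK // pnatr_eq0 -lt0n size_Omega_gt0.
Qed.

Lemma expect_cherries_succ n (h : nat -> R) : (0 < n)%N ->
  expect_n n.+1 (fun t => h (cherries t)) =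
  expect_n n (fun t => (2 * n%:R - 2 + 4 * (cherries t)%:R) * h (cherries t) +
                       (2 * n%:R - 4 * (cherries t)%:R) * h (cherries t).+1)
  / (4 * n%:R - 2).
Proof.
move=> n_gt0; rewrite /expect_n -big_Omega_cherries_succ // -mulrA -invfM.
rewrite [_ * (4 * _ - _)]mulrC -size_Omega_succ // invfM mulrA.
by rewrite [n.+1%:R * _]mulrC mulfK // pnatr_eq0.
Qed.

Lemma expect_cherries n : (1 < n)%N ->
  expect_n n (fun t => (cherries t)%:R : R) = n%:R * (n%:R - 1) / (2 * (2 * n%:R - 3)).
Proof.
elim: n => [|[|n] IH] // _; case: n IH => [|n] IH.
  by rewrite /expect_n /= big_seq1 /=; field.
rewrite (expect_cherries_succ (fun c => c%:R)) //.
set N : R := n.+2%:R.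
have affine c : (2 * N - 2 + 4 * c%:R) * c%:R + (2 * N - 4 * c%:R) * c.+1%:R =
    (4 * N - 6) * c%:R + 2 * N :> R by rewrite -natr1; ring.
under eq_fun do rewrite affine.
rewrite expectD expectZ expect_cst // IH // -/N -[n.+3%:R]natr1 -/N.
have N2 : 2 <= N by rewrite ler_nat.
by field; lra.
Qed.

Lemma expect_cherries_le n : (1 < n)%N ->
  expect_n n (fun t => (cherries t)%:R : R) <= (n%:R + 2) / 4.
Proof.
move=> n_gt1; rewrite expect_cherries //.
have n2 : 2 <= n%:R :> R by rewrite ler_nat.
by rewrite ler_pdivrMr ?mulr_gt0 //; [rewrite mulrAC ler_pdivlMr //; nra | lra].
Qed.

(* Chebyshev's association inequality for the oppositely ordered [X] and
   [g \o X]; the proof compares [(X - M) g(X)] with [(X - M) g(truncn M)]. *)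
Lemma expect_mul_nonincr_le n (X : btree -> nat) (g : nat -> R) (M : R) :
  (0 < n)%N -> {homo g : a b / (b <= a)%N >-> a <= b} -> (forall a, 0 <= g a) ->
  0 <= M -> expect_n n (fun t => (X t)%:R) <= M ->
  expect_n n (fun t => (X t)%:R * g (X t)) <= M * expect_n n (fun t => g (X t)).
Proof.
move=> n_gt0 g_nonincr g_ge0 M_ge0 EX_le.
pose K := Num.truncn M.
have pointwise a : a%:R * g a <= M * g a + g K * (a%:R - M).
  have [aK|Ka] := leqP a K.
    have aM : a%:R <= M.
      by apply: le_trans (_ : K%:R <= M); rewrite ?ler_nat ?truncn_le.
    have := g_nonincr _ _ aK; nra.
  have Ma : M <= a%:R by apply/ltW/(lt_le_trans (truncnS_gt M)); rewrite ler_nat.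
  have := g_nonincr _ _ (ltnW Ka); nra.
apply: (le_trans (ler_expect (fun t _ => pointwise (X t)))).
rewrite expectD !expectZ expectB expect_cst // gerDl.
by rewrite mulr_ge0_le0 // subr_le0.
Qed.

Lemma expect_pow_cherries_succ_le n (x : R) : (1 < n)%N -> 0 <= x <= 1 ->
  expect_n n.+1 (fun t => x ^+ cherries t) <=
  (3 * n%:R + n%:R * x - 2 * x) / (4 * n%:R - 2) * expect_n n (fun t => x ^+ cherries t).
Proof.
move=> n_gt1 /andP[x_ge0 x_le1].
have n2 : 2 <= n%:R :> R by rewrite ler_nat.
rewrite (expect_cherries_succ (fun c => x ^+ c) (ltnW n_gt1)).
rewrite [leRHS]mulrAC ler_pM2r ?invr_gt0; last by lra.
have regroup c : (2 * n%:R - 2 + 4 * c%:R) * x ^+ c + (2 * n%:R - 4 * c%:R) * x ^+ c.+1 =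
    (2 * n%:R - 2 + 2 * n%:R * x) * x ^+ c + 4 * (1 - x) * (c%:R * x ^+ c) :> R.
  by rewrite exprS; ring.
under eq_fun do rewrite regroup.
rewrite expectD !expectZ.
have M_ge0 : 0 <= (n%:R + 2) / 4 :> R by lra.
have := expect_mul_nonincr_le (X := cherries) (ltnW n_gt1) (ler_wiXn2l x_ge0 x_le1)
  (fun a => exprn_ge0 a x_ge0) M_ge0 (expect_cherries_le n_gt1).
have : 0 <= expect_n n (fun t => x ^+ cherries t).
  by apply: expect_ge0 => t _; apply: exprn_ge0.
nra.
Qed.

Lemma expect_pow_cherries_geometric (x y : R) : 0 <= x <= 1 -> (3 + x) / 4 < y ->
  exists2 C, 0 < C &
    \forall n \near \oo, expect_n n (fun t => x ^+ cherries t) <= C * y ^+ n.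
Proof.
move=> x01 xy; have /andP[x_ge0 x_le1] := x01; have y_gt0 : 0 < y by lra.
have [N _ /= stepN] : \forall n \near \oo,
    (1 < n)%N /\ (3 * n%:R + n%:R * x - 2 * x) / (4 * n%:R - 2) <= y.
  near=> n; split; first by near: n; apply: nbhs_infty_ge.
  have n2 : 2 <= n%:R :> R by rewrite ler_nat; near: n; apply: nbhs_infty_ge.
  have : 2 * (y - x) / (4 * y - 3 - x) <= n%:R by near: n; apply: nbhs_infty_ger.
  by rewrite !ler_pdivrMr; [nra | lra | lra].
exists (y ^+ N)^-1; first by rewrite invr_gt0 exprn_gt0.
near=> n; have Nn : (N <= n)%N by near: n; apply: nbhs_infty_ge.
rewrite -(subnK Nn); elim: (n - N)%N => [|j IH].
  rewrite add0n mulVf ?expf_neq0 ?gt_eqF // -(@expect_cst N 1 (ltnW (stepN N (leqnn N)).1)).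
  by apply: ler_expect => t _; apply: exprn_ile1.
have [n_gt1 factor_le] := stepN (j + N)%N (leq_addl _ _).
rewrite addSn (le_trans (expect_pow_cherries_succ_le n_gt1 x01)) //.
have E_ge0 : 0 <= expect_n (j + N) (fun t => x ^+ cherries t).
  by apply: expect_ge0 => t _; apply: exprn_ge0.
apply: (le_trans (ler_wpM2r E_ge0 factor_le)).
by rewrite exprS [leRHS]mulrCA ler_pM2l.
Unshelve. all: by end_near.
Qed.

End Expectation.

Section Inequalities.
Variable R : realFieldType.

Lemma bernoulli_ineq (h : R) n : -1 <= h -> 1 + n%:R * h <= (1 + h) ^+ n.
Proof.
move=> h_ge; elim: n => [|n IH]; first by rewrite mul0r expr0 addr0.
rewrite exprS -natr1.
have := ler_wpM2l (_ : 0 <= 1 + h) IH; have := sqr_ge0 h.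
have : 0 <= n%:R :> R by []; nra.
Qed.

Lemma expr1D_le_affine (a : R) k :
  0 <= a <= 1 -> (1 + a) ^+ k <= 1 + a * k%:R * 2 ^+ k.
Proof.
case/andP=> a_ge0 a_le1.
elim: k => [|k IH]; first by rewrite expr0 mulr0 mul0r addr0.
rewrite exprS [2 ^+ k.+1]exprS -natr1.
have := ler_wpM2l (_ : 0 <= 1 + a) IH.
have : 1 <= 2 ^+ k :> R by rewrite exprn_ege1 // ler1n.
have : a * (a * (k%:R * 2 ^+ k)) <= a * (k%:R * 2 ^+ k).
  by rewrite ler_piMl ?mulr_ge0 ?exprn_ge0.
nra.
Qed.

Lemma invXn_ge_tangent (s M : R) k : 0 < s -> 0 < M ->
  M ^- k * (k.+1%:R - k%:R * s / M) <= s ^- k.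
Proof.
move=> s_gt0 M_gt0; set u := M / s; have u_gt0 : 0 < u by rewrite divr_gt0.
have -> : s ^- k = M ^- k * u ^+ k.
  by rewrite /u expr_div_n; field; rewrite !expf_neq0 ?gt_eqF.
rewrite ler_pM2l ?invr_gt0 ?exprn_gt0 // -(ler_pM2l u_gt0) -exprS.
have -> : u * (k.+1%:R - k%:R * s / M) = 1 + k.+1%:R * (u - 1).
  by rewrite /u -natr1; field; rewrite !gt_eqF.
have u1 : -1 <= u - 1 by lra.
by have := bernoulli_ineq k.+1 u1; rewrite addrCA subrr addr0.
Qed.

Lemma invXn_le_threshold k (c a m : nat) (w : R) :
  (0 < a)%N -> (0 < m)%N -> 0 < w <= 1 ->
  c%:R ^- k <= (m%:R / a%:R) ^- k + (w ^+ a) ^+ c / w ^+ m.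
Proof.
move=> a_gt0 m_gt0 /andP[w_gt0 w_le1]; have w_ge0 := ltW w_gt0.
have wm_gt0 : 0 < w ^+ m by rewrite exprn_gt0.
have tail_ge0 : 0 <= (w ^+ a) ^+ c / w ^+ m by rewrite divr_ge0 ?exprn_ge0.
have B_gt0 : 0 < m%:R / a%:R :> R by rewrite divr_gt0 ?ltr0n.
have [mac|acm] := leqP m (a * c).
  have B_le : m%:R / a%:R <= c%:R :> R.
    by rewrite ler_pdivrMr ?ltr0n // -natrM ler_nat mulnC.
  have c_gt0 : 0 < c%:R :> R by apply: lt_le_trans B_le.
  rewrite ler_wpDr // lef_pV2 ?posrE ?exprn_gt0 //.
  by rewrite lerXn2r // nnegrE ltW.
have cX_le1 : c%:R ^- k <= 1 :> R.
  case: c {acm tail_ge0} => [|c].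
    by case: k => [|k]; rewrite ?expr0 ?invr1 ?expr0n ?invr0.
  by rewrite invf_le1 ?exprn_gt0 ?exprn_ege1 // ?ler1n ?ltr0n.
have tail_ge1 : 1 <= (w ^+ a) ^+ c / w ^+ m.
  by rewrite ler_pdivlMr // mul1r -exprM (ler_wiXn2l w_ge0) // ltnW.
apply: le_trans (le_trans cX_le1 tail_ge1) _.
by rewrite lerDr invr_ge0 exprn_ge0.
Qed.

(* Take [w = 1 - tau]: Bernoulli gives [w ^+ D >= 1 - D tau] and
   [w ^+ (4 d) * (1 + 4 d tau) <= 1], and [4 D d tau < 1] closes the gap. *)
Lemma exists_pow_gap (D : nat) :
  exists2 w : R, 0 < w <= 1 & 3 + w ^+ (4 * D.+1) < 4 * w ^+ D.
Proof.
set d : R := D.+1%:R; have d_ge1 : 1 <= d by rewrite ler1n.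
have dD : D%:R = d - 1 by rewrite /d -natr1 addrK.
set tau := (4 * d ^+ 2)^-1.
have tau_d : tau * (4 * d ^+ 2) = 1 by rewrite mulVf // gt_eqF //; nra.
have tau_gt0 : 0 < tau by rewrite invr_gt0; nra.
exists (1 - tau); first by apply/andP; split; nra.
have lowD : 1 - D%:R * tau <= (1 - tau) ^+ D.
  have tau_le : -1 <= - tau by nra.
  by have := bernoulli_ineq D tau_le; rewrite mulrN.
set x := (1 - tau) ^+ (4 * D.+1).
have x_ge0 : 0 <= x by rewrite exprn_ge0 //; nra.
have upx : x * (1 + 4 * d * tau) <= 1.
  have tau_ge : -1 <= tau by lra.
  have := ler_wpM2l x_ge0 (bernoulli_ineq (4 * D.+1) tau_ge); rewrite natrM -/d.
  by move/le_trans; apply; rewrite /x -exprMn exprn_ile1 //; nra.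
have gap : 1 < (1 - 4 * D%:R * tau) * (1 + 4 * d * tau) by rewrite dD; nra.
have : x < 1 - 4 * D%:R * tau by rewrite -(ltr_pM2r (_ : 0 < 1 + 4 * d * tau)); nra.
lra.
Qed.

End Inequalities.

Lemma cvg_natrX_geometric (R : realType) k (q : R) : 0 < q < 1 ->
  (fun n => n%:R ^+ k * q ^+ n) @ \oo --> 0.
Proof.
case/andP=> q_gt0 q_lt1.
have [|a expRa] := @expR_total R q^-1; first by rewrite invr_gt0.
have a_gt0 : 0 < a by rewrite -expR_gt1 expRa invf_gt1.
set F : R := k.+1`!%:R.
have F_gt0 : 0 < F by rewrite ltr0n fact_gt0.
apply/cvgr0Pnorm_le => e e_gt0; near=> n.
have n_gt0 : 0 < n%:R :> R by rewrite ltr0n; near: n; apply: nbhs_infty_gt.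
have expR_ge : (n%:R * a) ^+ k.+1 / F <= expR (n%:R * a).
  by have := expR_ge1Dxn k (ltW (mulr_gt0 n_gt0 a_gt0)); lra.
rewrite ger0_norm; last by rewrite mulr_ge0 ?exprn_ge0 // ltW.
have -> : q ^+ n = (expR (n%:R * a))^-1 by rewrite expRM_natl expRa exprVn invrK.
apply: (@le_trans _ _ (n%:R ^+ k * (F / (n%:R * a) ^+ k.+1))).
  rewrite ler_pM2l ?exprn_gt0 // -invf_div.
  by rewrite lef_pV2 ?posrE ?expR_gt0 ?divr_gt0 ?exprn_gt0 ?mulr_gt0.
have -> : n%:R ^+ k * (F / (n%:R * a) ^+ k.+1) = F / a ^+ k.+1 / n%:R.
  by rewrite exprMn exprS; field; rewrite !gt_eqF ?exprn_gt0.
rewrite ler_pdivrMr // -ler_pdivrMl //.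
by near: n; apply: nbhs_infty_ger.
Unshelve. all: by end_near.
Qed.

Section Asymptotics.
Variables (R : realType) (k : nat).

Lemma expect_invXn_cherries_ge_mean n : (1 < n)%N ->
  ((n%:R + 2) / 4) ^- k <= expect_n n (fun t => (cherries t)%:R ^- k : R).
Proof.
move=> n_gt1; set M : R := (n%:R + 2) / 4.
have M_gt0 : 0 < M by rewrite divr_gt0 // addr_gt0.
have c_gt0 t : t \in Omega n -> 0 < (cherries t)%:R :> R.
  move/leaves_Omega; rewrite ltr0n; case: t => [/= n1|l r _]; last exact: cherries_gt0.
  by move: n_gt1; rewrite -n1.
apply: le_trans (ler_expect (fun t ht => invXn_ge_tangent k (c_gt0 t ht) M_gt0)).
have affine (c : R) : M ^- k * (k.+1%:R - k%:R * c / M) =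
    M ^- k * k.+1%:R - M ^- k * k%:R / M * c by ring.
under eq_fun do rewrite affine.
rewrite expectB expect_cst ?(ltnW n_gt1) // expectZ.
have coef_ge0 : 0 <= M ^- k * k%:R / M.
  by rewrite divr_ge0 ?mulr_ge0 ?invr_ge0 ?exprn_ge0 // ltW.
have := ler_wpM2l coef_ge0 (expect_cherries_le R n_gt1).
by rewrite -/M divfK ?gt_eqF // -natr1 mulrDr mulr1; lra.
Qed.

Lemma expect_invXn_cherries_le_split n D (w : R) :
  (0 < n)%N -> (0 < D)%N -> 0 < w <= 1 ->
  expect_n n (fun t => (cherries t)%:R ^- k) <=
  ((D * n)%:R / (4 * D.+1)%:R) ^- k +
  expect_n n (fun t => (w ^+ (4 * D.+1)) ^+ cherries t) / w ^+ (D * n).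
Proof.
move=> n_gt0 D_gt0 w01; have Dn_gt0 : (0 < D * n)%N by rewrite muln_gt0 D_gt0.
apply: le_trans (ler_expect (fun t _ =>
  invXn_le_threshold k (cherries t) (isT : (0 < 4 * D.+1)%N) Dn_gt0 w01)) _.
by rewrite expectD expect_cst // /expect_n -mulr_suml mulrAC.
Qed.

Lemma cvg_expect_pow_cherries_tail D (w : R) :
  0 < w <= 1 -> 3 + w ^+ (4 * D.+1) < 4 * w ^+ D ->
  (fun n => (n%:R / 4) ^+ k *
     (expect_n n (fun t => (w ^+ (4 * D.+1)) ^+ cherries t) / w ^+ (D * n))) @ \oo --> 0.
Proof.
move=> /andP[w_gt0 w_le1]; set x := w ^+ (4 * D.+1) => gap.
have x01 : 0 <= x <= 1 by rewrite exprn_ge0 ?exprn_ile1 // ltW.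
have /andP[x_ge0 _] := x01.
have wD_gt0 : 0 < w ^+ D by rewrite exprn_gt0.
set y := ((3 + x) / 4 + w ^+ D) / 2.
have [|C C_gt0 expect_le] := expect_pow_cherries_geometric (y := y) x01.
  by rewrite /y; lra.
have q01 : 0 < y / w ^+ D < 1.
  by apply/andP; split; [rewrite divr_gt0 // | rewrite ltr_pdivrMr // mul1r];
    rewrite /y; lra.
have C4_gt0 : 0 < C / 4 ^+ k by rewrite divr_gt0 ?exprn_gt0.
apply/cvgr0Pnorm_le => e e_gt0.
have q_small : \forall n \near \oo,
    `|n%:R ^+ k * (y / w ^+ D) ^+ n| <= e / (C / 4 ^+ k).
  exact: cvgr0_norm_le _ (cvg_natrX_geometric k q01) _ (divr_gt0 e_gt0 C4_gt0).
near=> n.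
have E_ge0 : 0 <= expect_n n (fun t => x ^+ cherries t).
  by apply: expect_ge0 => t _; apply: exprn_ge0.
have w_ge0 := ltW w_gt0.
rewrite ger0_norm; last first.
  by apply: mulr_ge0; [rewrite exprn_ge0 // divr_ge0 | rewrite divr_ge0 // exprn_ge0].
apply: (@le_trans _ _ (C / 4 ^+ k * (n%:R ^+ k * (y / w ^+ D) ^+ n))).
  have -> : C / 4 ^+ k * (n%:R ^+ k * (y / w ^+ D) ^+ n) =
      (n%:R / 4) ^+ k * (C * y ^+ n / w ^+ (D * n)).
    by rewrite !expr_div_n exprM; field; rewrite !expf_neq0 ?gt_eqF.
  apply: ler_wpM2l; first by rewrite exprn_ge0 // divr_ge0.
  by rewrite ler_pM2r ?invr_gt0 ?exprn_gt0 //; near: n.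
rewrite mulrC -ler_pdivlMr //; apply: le_trans (ler_norm _) _.
by near: n.
Unshelve. all: by end_near.
Qed.

Lemma expect_invXn_cherries_scaled_ge e : 0 < e -> \forall n \near \oo,
  1 - e <= expect_n n (fun t => (cherries t)%:R ^- k : R) * (n%:R / 4) ^+ k.
Proof.
move=> e_gt0; near=> n.
have n_gt1 : (1 < n)%N by near: n; apply: nbhs_infty_gt.
have n_large : 2 * k%:R / e <= n%:R :> R by near: n; apply: nbhs_infty_ger.
have n2 : 2 <= n%:R :> R by rewrite ler_nat.
have nk_ge0 : 0 <= (n%:R / 4) ^+ k :> R by rewrite exprn_ge0 // divr_ge0.
apply: le_trans (ler_wpM2r nk_ge0 (expect_invXn_cherries_ge_mean n_gt1)).
have -> : ((n%:R + 2) / 4) ^- k * (n%:R / 4) ^+ k = (1 + - (2 / (n%:R + 2))) ^+ k :> R.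
  by rewrite mulrC -expr_div_n; congr (_ ^+ _); field; lra.
have h_ge : -1 <= - (2 / (n%:R + 2)) :> R by rewrite lerN2 ler_pdivrMr; lra.
apply: le_trans (bernoulli_ineq k h_ge).
rewrite ler_pdivrMr // in n_large.
rewrite mulrN lerD2l lerN2 mulrA ler_pdivrMr; nra.
Unshelve. all: by end_near.
Qed.

Lemma expect_invXn_cherries_scaled_le e : 0 < e -> \forall n \near \oo,
  expect_n n (fun t => (cherries t)%:R ^- k : R) * (n%:R / 4) ^+ k <= 1 + e.
Proof.
move=> e_gt0.
have [D0 _ /= D0_large] := nbhs_infty_ger (2 * k%:R * 2 ^+ k / e : R).
set D := D0.+1; have D_gt0 : (0 < D)%N by [].
have D_large : 2 * k%:R * 2 ^+ k / e <= D%:R :> R by apply: D0_large => /=.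
have DR_gt0 : 0 < D%:R :> R by rewrite ltr0n.
have power_le : (1 + D%:R^-1) ^+ k <= 1 + e / 2 :> R.
  have D01 : 0 <= (D%:R : R)^-1 <= 1 by rewrite invr_ge0 ltW // invf_le1 // ler1n.
  apply: le_trans (expr1D_le_affine k D01) _; rewrite lerD2l.
  rewrite ler_pdivrMr // in D_large.
  by rewrite -mulrA ler_pdivrMl // mulrA; nra.
have [w w01 gap] := exists_pow_gap R D.
have e2_gt0 : 0 < e / 2 by rewrite divr_gt0.
have tail : \forall n \near \oo, `|(n%:R / 4) ^+ k *
    (expect_n n (fun t => (w ^+ (4 * D.+1)) ^+ cherries t) / w ^+ (D * n))| <= e / 2.
  exact: cvgr0_norm_le _ (cvg_expect_pow_cherries_tail w01 gap) _ e2_gt0.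
near=> n.
have n_gt0 : (0 < n)%N by near: n; apply: nbhs_infty_gt.
have nR_gt0 : 0 < n%:R :> R by rewrite ltr0n.
have nk_ge0 : 0 <= (n%:R / 4) ^+ k :> R by rewrite exprn_ge0 // divr_ge0 // ltW.
apply: le_trans (ler_wpM2r nk_ge0 (expect_invXn_cherries_le_split n_gt0 D_gt0 w01)) _.
rewrite mulrDl [X in _ + X]mulrC.
have -> : ((D * n)%:R / (4 * D.+1)%:R) ^- k * (n%:R / 4) ^+ k = (1 + D%:R^-1) ^+ k :> R.
  rewrite mulrC -expr_div_n; congr (_ ^+ _); rewrite !natrM -natr1.
  by field; rewrite !gt_eqF //; lra.
have : (n%:R / 4) ^+ k *
    (expect_n n (fun t => (w ^+ (4 * D.+1)) ^+ cherries t) / w ^+ (D * n)) <= e / 2.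
  by apply: le_trans (ler_norm _) _; near: n.
lra.
Unshelve. all: by end_near.
Qed.

End Asymptotics.

Unset Implicit Arguments.

Theorem proposition2 (R : realType) (k : nat) :
  (fun n : nat => expect_n n (fun t => ((S2 t)%:R : R) ^- k)
                  / ((n%:R / 4) ^- k)) @ \oo --> (1 : R).
Proof.
rewrite (funext S2_cherries); under eq_fun do rewrite invrK.
apply/cvgrPdist_le => e e_gt0; near=> n; rewrite ler_distlC.
by apply/andP; split; near: n;
  [apply: expect_invXn_cherries_scaled_ge | apply: expect_invXn_cherries_scaled_le].
Unshelve. all: by end_near.
Qed.
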